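(* In the single-item all-pay auction with budgets described in the context, in a Nash equilibrium $(F_1,F_2)$, if $\underline{x}_1<\overline{x}_1$ and $\underline{x}_2<\overline{x}_2$, then $\underline{x}_1=\underline{x}_2=0$.
   Context: Single-item all-pay auction with budgets. There are two players $i\in\{1,2\}$; $-i$ denotes the opponent of $i$. Player $i$ has budget $B_i\ge 0$ and valuation $v_i>0$ for a single item. A pure strategy of player $i$ is a bid $x_i\in[0,B_i]$; a mixed strategy is a probability distribution on $[0,B_i]$, described by its cumulative distribution function $F_i$. The player with the higher bid wins the item. Tie-breaking: if $x_1=x_2=\min\{B_1,B_2,v_1,v_2\}$ and $\min\{B_i,v_i\}>\min\{B_{-i},v_{-i}\}$ for some $i$, then player $i$ wins; in all other ties each player wins with probability $\frac12$. Player $i$'s utility is $v_i-x_i$ if he wins and $-x_i$ if he loses. A Nash equilibrium is a pair $(F_1,F_2)$ such that each $F_i$ maximizes player $i$'s expected utility against $F_{-i}$ over all mixed strategies on $[0,B_i]$. $Supp(F_i)$ is the support of $F_i$, $\overline{x}_i=\sup Supp(F_i)$ and $\underline{x}_i=\inf Supp(F_i)$. *)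

From HB Require Import structures.
From mathcomp Require Import all_boot all_order all_algebra.
From mathcomp Require Import all_classical all_reals all_analysis.
Set Implicit Arguments. Unset Strict Implicit. Unset Printing Implicit Defensive.
Import Order.TTheory GRing.Theory Num.Theory.
Import numFieldNormedType.Exports.
Local Open Scope classical_set_scope.
Local Open Scope ring_scope.

Section AllPay.
Variable R : realType.

(* Probability that the player with own budget/valuation (B, v) wins the item
   when bidding x against an opponent with budget/valuation (B', v') who bids y,
   according to the tie-breaking rule of the paper. *)
Definition win_prob (B v B' v' x y : R) : R :=
  if y < x then 1
  else if x < y then 0
  else
    let m := Num.min (Num.min B B') (Num.min v v') in
    if (x == m) && (Num.min B' v' < Num.min B v) then 1
    else if (x == m) && (Num.min B v < Num.min B' v') then 0
    else 2^-1.

Definition payoff (B v B' v' x y : R) : R := v * win_prob B v B' v' x y - x.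

Definition strategy_on (B : R) (mu : probability R R) : Prop :=
  mu `[0, B]%classic = 1%E.

Definition exp_util (B v B' v' : R) (mu nu : probability R R) : \bar R :=
  (\int[mu]_x \int[nu]_y (payoff B v B' v' x y)%:E)%E.

Definition nash_eq (B1 v1 B2 v2 : R) (mu1 mu2 : probability R R) : Prop :=
  [/\ strategy_on B1 mu1, strategy_on B2 mu2,
      (forall mu, strategy_on B1 mu ->
          (exp_util B1 v1 B2 v2 mu mu2 <= exp_util B1 v1 B2 v2 mu1 mu2)%E)
    & (forall mu, strategy_on B2 mu ->
          (exp_util B2 v2 B1 v1 mu mu1 <= exp_util B2 v2 B1 v1 mu2 mu1)%E)].

Definition supp (mu : probability R R) : set R :=
  [set x : R | forall e : R, 0 < e ->
     (0%E < mu (`](x - e)%R, (x + e)%R[%classic))%E].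

Definition supp_inf (mu : probability R R) : R := inf (supp mu).
Definition supp_sup (mu : probability R R) : R := sup (supp mu).

End AllPay.

(* Suppose a := inf Supp(F1) > 0.  Player 2 never wins with a bid below a, so
   the bid 0 beats every bid in (0, a) and F2 puts no mass on (0, a).  If F2 has
   no atom at a, player 1's bids near a win barely more often than the bid a/4
   while costing at least a/2 more, which contradicts a being in Supp(F1).  If
   F2 has an atom at a, player 2 keeps it only if it wins ties at a with
   positive probability, so F1 has an atom at a as well; moving that atom
   slightly above a wins all of F2's atom at an arbitrarily small extra cost.
   The symmetric argument gives inf Supp(F2) = 0. *)

From HB Require Import structures.
From mathcomp Require Import all_boot all_order all_algebra.
From mathcomp Require Import all_classical all_reals all_analysis.
From mathcomp Require Import ring lra measurable_realfun.
Import Order.TTheory GRing.Theory Num.Theory.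
Import numFieldNormedType.Exports.
Local Open Scope classical_set_scope.
Local Open Scope ring_scope.

Section ProbabilityValue.
Context {d} {T : measurableType d} {R : realType} (mu : probability T R).
Implicit Types A B C D : set T.

Definition pr A : R := fine (mu A).

Lemma prE A : measurable A -> mu A = (pr A)%:E.
Proof.
move=> mA; rewrite fineK // ge0_fin_numE ?measure_ge0 //.
by rewrite (le_lt_trans (probability_le1 mu mA)) // ltry.
Qed.

Lemma pr_ge0 A : 0 <= pr A.
Proof. exact/fine_ge0/measure_ge0. Qed.

Lemma pr_le1 A : measurable A -> pr A <= 1.
Proof. by move=> mA; rewrite -lee_fin -prE // probability_le1. Qed.

Lemma le_pr {A B} : measurable A -> measurable B -> A `<=` B -> pr A <= pr B.
Proof.
by move=> mA mB AB; rewrite -lee_fin -!prE //; apply: le_measure; rewrite ?inE.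
Qed.

Lemma pr_subadd {A B C} : measurable A -> measurable B -> measurable C ->
  A `<=` B `|` C -> pr A <= pr B + pr C.
Proof.
move=> mA mB mC ABC; rewrite -lee_fin EFinD -!prE //.
apply: le_trans (measureU2 _ mB mC).
by apply: le_measure; rewrite ?inE //; exact: measurableU.
Qed.

Lemma pr_setU {A B} : measurable A -> measurable B -> A `&` B = set0 ->
  pr (A `|` B) = pr A + pr B.
Proof.
move=> mA mB AB; apply: EFin_inj.
by rewrite EFinD -!prE ?measureU //; exact: measurableU.
Qed.

Lemma pr_bigcup_gt0 {A} {F : nat -> set T} : measurable A ->
  (forall n, measurable (F n)) -> A `<=` \bigcup_n F n ->
  0 < pr A -> exists n, 0 < pr (F n).
Proof.
move=> mA mF AF muA; apply: contrapT; move=> noF.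
have nullF n : mu.-negligible (F n).
  exists (F n); split => //; rewrite prE //; congr (_%:E).
  by apply/eqP; rewrite eq_le pr_ge0 andbT leNgt; apply/negP => Fn; apply: noF; exists n.
have [N [mN muN FN]] := negligible_bigcup nullF.
have : (mu A <= mu N)%E by apply: le_measure; rewrite ?inE //; exact: subset_trans AF FN.
by rewrite muN prE // lee_fin; lra.
Qed.

Lemma integrable_indicZ A (k : R) : measurable A ->
  mu.-integrable setT (EFin \o (fun x => k * \1_A x)).
Proof.
move=> mA; apply: (eq_integrable measurableT _ _ _
  (integrableZl measurableT k (integrable_indic mu mA))) => x _ /=.
by rewrite EFinM.
Qed.

Lemma integral_indic_affine A C (a b c : R) : measurable A -> measurable C ->
  (\int[mu]_x ((a * \1_A x + b * \1_C x - c)%:E) = (a * pr A + b * pr C - c)%:E)%E.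
Proof.
move=> mA mC.
have intZ := integrable_indicZ.
have intc : mu.-integrable setT (EFin \o cst c) by exact: finite_measure_integrable_cst.
have intZE (E : set T) (k : R) : measurable E ->
    (\int[mu]_x (EFin \o (fun x => (k * \1_E x)%R)) x = (k * pr E)%:E)%E.
  move=> mE; under eq_integral do rewrite /= EFinM.
  rewrite integralZl ?integral_indic ?setIT //; last exact: integrable_indic.
  by rewrite EFinM; congr (_ * _)%E; exact: prE.
under eq_integral do rewrite EFinB.
rewrite integralB_EFin //; last first.
  by apply: (eq_integrable _ _ _ _ (integrableD measurableT (intZ _ a mA) (intZ _ b mC))).
under eq_integral do rewrite EFinD.
rewrite (integralD_EFin _ (intZ _ a mA) (intZ _ b mC)) // !intZE //.
(* [integral_cst] exposes [mu] through a coercion path different from the one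
   [probability_setT] is stated with, so the mass of [setT] is replaced by
   conversion rather than by rewriting. *)
rewrite integral_cst // [X in (_ * X)%E](_ : _ = 1%E) ?mule1; last first.
  exact: probability_setT.
by rewrite EFinB EFinD.
Qed.

Lemma pr_setI_full {A D} : measurable A -> measurable D -> mu (~` D) = 0%E ->
  pr (A `&` D) = pr A.
Proof.
move=> mA mD muDC; have prDC : pr (~` D) = 0 by rewrite /pr muDC.
apply/eqP; rewrite eq_le le_pr //=; last exact: measurableI.
rewrite -[leRHS]addr0 -prDC; apply: pr_subadd => //.
- exact: measurableI.
- exact: measurableC.
- by move=> x Ax; have [Dx|NDx] := pselect (D x); [left|right].
Qed.

Lemma integral_on_full_set {D} {f : T -> \bar R} : measurable D -> mu (~` D) = 0%E ->
  measurable_fun setT f -> (\int[mu]_x f x = \int[mu]_(x in D) f x)%E.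
Proof.
move=> mD muDC mf; rewrite [RHS]integral_mkcond.
apply: ae_eq_integral => //.
  by apply/(measurable_restrictT _ mD); exact: measurable_funS mf.
exists (~` D); split => //; first exact: measurableC.
by move=> x /= /not_implyP[_]; rewrite patchE; case: ifPn => // + _; rewrite notin_setE.
Qed.

Lemma integrable_bounded {D} {f : T -> R} {M : R} : measurable D ->
  measurable_fun setT f -> (forall x, D x -> `|f x| <= M) ->
  mu.-integrable D (EFin \o f).
Proof.
move=> mD mf fM; apply: measurable_bounded_integrable => //.
- by rewrite (le_lt_trans (probability_le1 _ mD)) // ltry.
- exact: measurable_funS mf.
- exists M; split; first exact: num_real.
  by move=> M' MM' x Dx; apply: le_trans (fM x Dx) (ltW MM').
Qed.

Lemma integral_le_gap {D A} {f : T -> R} {c eps M : R} :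
  measurable D -> measurable A -> mu (~` D) = 0%E -> measurable_fun setT f ->
  (forall x, D x -> `|f x| <= M) -> (forall x, D x -> f x + eps * \1_A x <= c) ->
  (\int[mu]_x (f x)%:E <= (c - eps * pr A)%:E)%E.
Proof.
move=> mD mA muDC mf fM fc.
have intf : mu.-integrable D (EFin \o f) by exact: integrable_bounded fM.
have intA : mu.-integrable D (EFin \o (fun x => eps * \1_A x)).
  by apply: (integrableS measurableT) => //; exact: integrable_indicZ.
have muD : mu D = 1%E.
  by rewrite -[D]setCK probability_setC ?muDC ?sube0 //; exact: measurableC.
have intAE :
    (\int[mu]_(x in D) (EFin \o (fun x => (eps * \1_A x)%R)) x = (eps * pr A)%:E)%E.
  under eq_integral do rewrite /= EFinM.
  rewrite integralZl //; last first.
    by apply: (integrableS measurableT) => //; exact: integrable_indic.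
  rewrite integral_indic // EFinM -(pr_setI_full mA mD muDC) //; congr (_ * _)%E.
  exact/prE/measurableI.
have : (\int[mu]_(x in D) ((f x)%:E + (eps * \1_A x)%:E) <= \int[mu]_(x in D) c%:E)%E.
  apply: le_integral => //; first exact: integrableD.
    exact: finite_measure_integrable_cst.
  by move=> x /set_mem Dx; rewrite -EFinD lee_fin fc.
rewrite integralD_EFin // intAE integral_cst // [X in (_ * X)%E](_ : _ = 1%E) ?mule1 //.
rewrite (integral_on_full_set mD muDC); last exact/measurable_EFinP.
have /fineK Ifin := integrable_fin_num mD intf.
by rewrite -Ifin -EFinD !lee_fin lerBrDr.
Qed.

End ProbabilityValue.

Section BidUtility.
Context {R : realType}.
Implicit Types (mu nu : probability R R) (x y : R).

Lemma win_prob_ge0 (B v B' v' : R) x y : 0 <= win_prob B v B' v' x y.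
Proof. by rewrite /win_prob; do 4 case: ifP => _ //; rewrite invr_ge0 ler0n. Qed.

Lemma win_prob_le1 (B v B' v' : R) x y : win_prob B v B' v' x y <= 1.
Proof. by rewrite /win_prob; do 4 case: ifP => _ //; rewrite invf_le1 ?ler1n. Qed.

Lemma win_prob_compl (B v B' v' : R) x y :
  win_prob B v B' v' x y + win_prob B' v' B v y x = 1.
Proof.
(* The constants of [win_prob] are elaborated through other structure paths
   than those of [addr0] and [add0r], so each case is closed by conversion. *)
have half : 2^-1 + 2^-1 = 1 :> R by rewrite [RHS]splitr mul1r.
rewrite /win_prob [Num.min B' B]minC [Num.min v' v]minC.
have [_|_|<-] := ltgtP y x; [exact: addr0|exact: add0r|].
case: (y == _) => /=; last exact: half.
have [_|_|_] := ltgtP (Num.min B' v') (Num.min B v);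
  [exact: addr0 | exact: add0r | exact: half].
Qed.

Definition tie_share (B v B' v' : R) x : R := win_prob B v B' v' x x.

Lemma tie_shareE (B v B' v' : R) x : tie_share B v B' v' x =
  if x == Num.min (Num.min B B') (Num.min v v')
  then tie_share B v B' v' (Num.min (Num.min B B') (Num.min v v')) else 2^-1.
Proof.
rewrite /tie_share; case: eqP => [<-//|/eqP xm].
by rewrite /win_prob ltxx (negbTE xm).
Qed.

Definition cdf_lt nu x := pr nu `]-oo, x[.
Definition cdf_le nu x := pr nu `]-oo, x].
Definition atom nu x := pr nu [set x].

Definition bid_util (B v B' v' : R) nu x :=
  v * (cdf_lt nu x + tie_share B v B' v' x * atom nu x) - x.

Lemma win_probE (B v B' v' : R) x y : win_prob B v B' v' x y =
  \1_`]-oo, x[ y + tie_share B v B' v' x * \1_[set x] y.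
Proof.
rewrite /tie_share {1}/win_prob !indicE; have [yx|xy|->] := ltgtP y x.
- rewrite mem_set /= ?in_itv //= memNset ?mulr0 ?addr0 //= => yx'.
  by rewrite yx' ltxx in yx.
- rewrite memNset /= ?in_itv /= ?ltNge ?(ltW xy) // memNset ?mulr0 ?addr0 //= => yx.
  by rewrite yx ltxx in xy.
- rewrite memNset /=; last by rewrite in_itv /= ltxx.
  by rewrite mem_set //= mulr1 add0r /win_prob ltxx.
Qed.

Lemma integral_payoff (B v B' v' : R) nu x :
  (\int[nu]_y (payoff B v B' v' x y)%:E = (bid_util B v B' v' nu x)%:E)%E.
Proof.
under eq_integral do rewrite /payoff win_probE mulrDr mulrA.
by rewrite integral_indic_affine // /bid_util mulrDr mulrA.
Qed.

Lemma exp_utilE (B v B' v' : R) mu nu :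
  exp_util B v B' v' mu nu = (\int[mu]_x (bid_util B v B' v' nu x)%:E)%E.
Proof. by apply: eq_integral => x _; rewrite integral_payoff. Qed.

Lemma cdf_leE nu x : cdf_le nu x = cdf_lt nu x + atom nu x.
Proof.
rewrite /cdf_le -pr_setU //; last first.
  by apply/seteqP; split => // y [/=]; rewrite in_itv /= => + yx; rewrite yx ltxx.
congr pr; apply/seteqP; split => y /=; rewrite !in_itv /=.
  by rewrite le_eqVlt => /orP[/eqP ->|->]; [right|left].
by case=> [/ltW|->].
Qed.

Lemma le_cdf_lt nu : {homo cdf_lt nu : x y / x <= y}.
Proof.
move=> x y xy; apply: le_pr => // z /=; rewrite !in_itv /=.
by move=> zx; apply: lt_le_trans zx xy.
Qed.

Lemma le_cdf_le nu : {homo cdf_le nu : x y / x <= y}.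
Proof.
move=> x y xy; apply: le_pr => // z /=; rewrite !in_itv /=.
by move=> zx; apply: le_trans zx xy.
Qed.

Lemma measurable_bid_util (B v B' v' : R) nu :
  measurable_fun setT (bid_util B v B' v' nu).
Proof.
set m := Num.min (Num.min B B') (Num.min v v').
have -> : bid_util B v B' v' nu = fun x => v * (cdf_lt nu x +
    (if x == m then tie_share B v B' v' m else 2^-1) * (cdf_le nu x - cdf_lt nu x)) - x.
  by apply/funext => x; rewrite /bid_util cdf_leE addrAC subrr add0r -tie_shareE.
apply: measurable_funB => //; apply: measurable_funM => //.
apply: measurable_funD; first exact: nondecreasing_measurable (@le_cdf_lt nu).
apply: measurable_funM.
  by apply: measurable_fun_ifT => //; exact: measurable_fun_eqr.
by apply: measurable_funB;
  [exact: nondecreasing_measurable (@le_cdf_le nu) |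
   exact: nondecreasing_measurable (@le_cdf_lt nu)].
Qed.

Lemma win_mass_bounds (B v B' v' : R) nu x :
  cdf_lt nu x <= cdf_lt nu x + tie_share B v B' v' x * atom nu x <= cdf_le nu x.
Proof.
rewrite cdf_leE lerDl lerD2l mulr_ge0 ?win_prob_ge0 ?pr_ge0 //=.
by rewrite ler_piMl ?pr_ge0 ?win_prob_le1.
Qed.

Lemma bid_util_le_cdf_le (B v B' v' : R) nu x : 0 <= v ->
  bid_util B v B' v' nu x <= v * cdf_le nu x - x.
Proof.
by move=> v0; rewrite lerD2r ler_wpM2l //; case/andP: (win_mass_bounds B v B' v' nu x).
Qed.

Lemma bid_util_ge_cdf_lt (B v B' v' : R) nu x : 0 <= v ->
  v * cdf_lt nu x - x <= bid_util B v B' v' nu x.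
Proof.
by move=> v0; rewrite lerD2r ler_wpM2l //; case/andP: (win_mass_bounds B v B' v' nu x).
Qed.

Lemma bid_util0_ge0 (B v B' v' : R) nu : 0 <= v -> 0 <= bid_util B v B' v' nu 0.
Proof.
move=> v0; apply: le_trans (bid_util_ge_cdf_lt B v B' v' nu 0 v0).
by rewrite subr0 mulr_ge0 ?pr_ge0.
Qed.

Lemma normr_bid_util_le (B v B' v' : R) nu x :
  `|bid_util B v B' v' nu x| <= `|v| + `|x|.
Proof.
have /andP[W0 WH] := win_mass_bounds B v B' v' nu x.
have W1 : cdf_lt nu x + tie_share B v B' v' x * atom nu x <= 1.
  by apply: le_trans WH _; exact: pr_le1.
apply: le_trans (ler_normB _ _) _; rewrite lerD2r normrM ler_piMr //.
by rewrite ger0_norm // (le_trans (pr_ge0 _ _) W0).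
Qed.

Lemma cdf_le_lt nu x y : x < y -> cdf_le nu x <= cdf_lt nu y.
Proof.
move=> xy; apply: le_pr => // z /=; rewrite !in_itv /= => zx.
exact: le_lt_trans zx xy.
Qed.

Lemma cdf_le_itvoc nu x a e : x <= a + e ->
  cdf_le nu x <= cdf_le nu a + pr nu `]a, (a + e)].
Proof.
move=> xae; apply: pr_subadd => // z /=; rewrite !in_itv /= => zx.
by have [_|_] := leP z a; [left | right => /=; exact: le_trans zx xae].
Qed.

End BidUtility.

Section BestResponse.
Context {R : realType}.
Implicit Types (mu nu : probability R R) (A : set R).

Definition best_response (B v B' v' : R) mu nu :=
  forall mu', strategy_on B mu' ->
    (exp_util B v B' v' mu' nu <= exp_util B v B' v' mu nu)%E.

Lemma strategy_on_dirac {B c : R} : 0 <= c <= B ->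
  strategy_on B (\d_c : probability R R).
Proof. by move=> cB; rewrite /strategy_on /= diracE mem_set. Qed.

Lemma strategy_onC {B : R} {mu} : strategy_on B mu -> mu (~` `[0, B]) = 0%E.
Proof. by move=> smu; rewrite probability_setC // smu subee. Qed.

Lemma best_response_ge_bid (B v B' v' c : R) mu nu :
  best_response B v B' v' mu nu -> 0 <= c <= B ->
  ((bid_util B v B' v' nu c)%:E <= exp_util B v B' v' mu nu)%E.
Proof.
move=> br cB; have := br _ (strategy_on_dirac cB).
rewrite exp_utilE integral_dirac ?diracT ?mul1e //.
by apply/measurable_EFinP; exact: measurable_bid_util.
Qed.

Lemma best_response_dominated_null {B v B' v' b eps : R} {mu nu A} :
  strategy_on B mu -> best_response B v B' v' mu nu -> 0 <= b <= B ->
  measurable A -> 0 < eps ->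
  (forall x, A x -> bid_util B v B' v' nu x + eps <= bid_util B v B' v' nu b) ->
  mu A = 0%E.
Proof.
move=> smu br bB mA eps0 dom.
set U := bid_util B v B' v' nu; set E := exp_util B v B' v' mu nu.
have mD : measurable `[0, B]%classic by exact: measurable_itv.
have mU : measurable_fun setT U by exact: measurable_bid_util.
have UM x : `[0, B]%classic x -> `|U x| <= `|v| + B.
  rewrite /= in_itv /= => /andP[x0 xB]; apply: le_trans (normr_bid_util_le _ _ _ _ _ _) _.
  by rewrite lerD2l ger0_norm.
have Efin : E \is a fin_num.
  rewrite /E exp_utilE (integral_on_full_set mu mD (strategy_onC smu)); last first.
    exact/measurable_EFinP.
  exact: (integrable_fin_num mD (integrable_bounded mu mD mU UM)).
have UE x : `[0, B]%classic x -> U x <= fine E.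
  rewrite /= in_itv /= => cB; rewrite -lee_fin fineK //.
  exact: best_response_ge_bid br cB.
have gap_on_D x : `[0, B]%classic x -> U x + eps * \1_A x <= fine E.
  move=> Dx; rewrite indicE; case: (boolP (x \in A)) => [/set_mem Ax|_].
    by rewrite mulr1 (le_trans (dom x Ax)) // UE // /= in_itv.
  by rewrite mulr0 addr0 UE.
have := integral_le_gap mu mD mA (strategy_onC smu) mU UM gap_on_D.
rewrite -exp_utilE -/E -[X in (X <= _)%E]fineK // lee_fin => gap.
have : eps * pr mu A <= 0 by lra.
rewrite pmulr_rle0 // => prA.
by rewrite prE //; congr (_%:E); apply/eqP; rewrite eq_le prA pr_ge0.
Qed.

End BestResponse.

Section IntervalMass.
Context {R : realType} (nu : probability R R).

Lemma pr_itvoo_shrinkl (c d : R) : 0 < pr nu `]c, d[ ->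
  exists2 c', c < c' & 0 < pr nu `]c', d[.
Proof.
move=> cd_gt0.
have cover : `]c, d[ `<=` \bigcup_n `](c + n.+1%:R^-1), d[%classic.
  move=> y /=; rewrite in_itv /= => /andP[cy yd].
  have [k ck] := ltr_add_invr cy; exists k => //=.
  by rewrite in_itv /= ck yd.
have [n ] := pr_bigcup_gt0 nu (measurable_itv _) (fun=> measurable_itv _) cover cd_gt0.
by exists (c + n.+1%:R^-1) => //; rewrite ltrDl invr_gt0 ltr0n.
Qed.

Lemma pr_itvoc_small (a eta : R) : 0 < eta ->
  exists2 e, 0 < e & pr nu `]a, (a + e)] < eta.
Proof.
move=> eta0; pose F n := `]a, (a + n.+1%:R^-1)]%classic.
have mF n : measurable (F n) by exact: measurable_itv.
have capF : \bigcap_n F n = set0.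
  apply/seteqP; split => // y Fy.
  have /andP[ay _] : y \in `]a, (a + 1%:R^-1)] := Fy 0%N I.
  have [k ak] := ltr_add_invr ay.
  have : y \in `]a, (a + k.+1%:R^-1)] := Fy k I.
  by rewrite in_itv /= leNgt ak andbF.
have F_decr : nonincreasing_seq F.
  move=> n m nm; apply/subsetPset => y; rewrite /F /= !in_itv /= => /andP[ay ym].
  rewrite ay (le_trans ym) // lerD2l lef_pV2 ?posrE ?ltr0n // ler_nat.
  by rewrite ltnS.
have mcapF : measurable (\bigcap_n F n) by rewrite capF.
have F0_fin : (nu (F 0%N) < +oo)%E.
  by rewrite (le_lt_trans (probability_le1 nu (mF 0%N))) ?ltry.
have := nonincreasing_cvg_mu F0_fin mF mcapF F_decr.
rewrite capF [X in _ --> X](_ : _ = 0%E); last exact: measure0.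
move=> /fine_cvgP[_ cvF].
have [N _ FN] := cvgr_lt _ cvF _ eta0.
by exists N.+1%:R^-1; [rewrite invr_gt0 ltr0n | exact: FN N (leqnn N)].
Qed.

End IntervalMass.

Section Support.
Context {R : realType} {B : R} {mu : probability R R}.
Hypothesis smu : strategy_on B mu.

Lemma strategy_null_outside {A : set R} : measurable A ->
  A `<=` ~` `[0, B] -> mu A = 0%E.
Proof.
move=> mA AC; apply/eqP; rewrite eq_le measure_ge0 andbT -(strategy_onC smu).
by apply: le_measure; rewrite ?inE //; exact: measurableC.
Qed.

Lemma supp_in_itv {x} : supp mu x -> 0 <= x <= B.
Proof.
move=> Sx; apply/negPn/negP => xB.
have [e e0 ball_out] : exists2 e, 0 < e & `](x - e), (x + e)[ `<=` ~` `[0, B].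
  move: xB; rewrite negb_and -!ltNge => /orP[x0|Bx].
  - by exists (- x); [lra | move=> y /=; rewrite !in_itv /=; lra].
  - by exists (x - B); [lra | move=> y /=; rewrite !in_itv /=; lra].
by have := Sx e e0; rewrite (strategy_null_outside (measurable_itv _) ball_out) ltxx.
Qed.

Lemma supp_lbound : lbound (supp mu) 0.
Proof. by move=> x /supp_in_itv /andP[]. Qed.

Lemma supp_inf_le {x} : supp mu x -> supp_inf mu <= x.
Proof. by apply: ge_inf; exists 0; exact: supp_lbound. Qed.

Lemma supp_neq0 : supp_inf mu < supp_sup mu -> supp mu !=set0.
Proof.
rewrite /supp_inf /supp_sup; have [->|/set0P //] := eqVneq (supp mu) set0.
by rewrite inf0 sup0 ltxx.
Qed.

Lemma supp_inf_itv : supp_inf mu < supp_sup mu -> 0 <= supp_inf mu < B.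
Proof.
move=> lt_inf_sup; have S0 := supp_neq0 lt_inf_sup.
rewrite lb_le_inf //=; last exact: supp_lbound.
apply: lt_le_trans lt_inf_sup _; apply: ge_sup => // x /supp_in_itv /andP[] //.
Qed.

Lemma pr_near_supp_inf e : supp mu !=set0 -> 0 < e ->
  0 < pr mu `](supp_inf mu - e), (supp_inf mu + e)[.
Proof.
move=> S0 e0; have e20 : 0 < e / 2 by rewrite divr_gt0.
have [x Sx xa] := @inf_adherent _ _ _ e20 (conj S0 (ex_intro _ 0 supp_lbound)).
have := Sx _ e20; rewrite prE ?lte_fin; last exact: measurable_itv.
move=> /lt_le_trans; apply; apply: le_pr => // y /=; rewrite !in_itv /=.
have := supp_inf_le Sx; rewrite /supp_inf in xa *; lra.
Qed.

Lemma exists_supp_le c : 0 < cdf_le mu c -> exists2 x, supp mu x & x <= c.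
Proof.
move=> cdf_c.
pose T := [set t | 0 < cdf_le mu t].
have T_ge0 t : T t -> 0 <= t.
  rewrite /T /= leNgt; apply: contraPN => t0.
  rewrite /cdf_le /pr (strategy_null_outside (measurable_itv _)) ?ltxx //.
  by move=> y /=; rewrite !in_itv /=; lra.
have infT : has_inf T by split; [exists c | exists 0 => t /T_ge0].
have infT_le t : T t -> inf T <= t by apply: ge_inf; exists 0 => ? /T_ge0.
exists (inf T); last exact: infT_le.
move=> e e0; have [t Tt te] := inf_adherent e0 infT.
have below_null : cdf_le mu (inf T - e) = 0.
  apply/eqP; rewrite eq_le pr_ge0 andbT leNgt; apply/negP => /infT_le; lra.
rewrite prE ?lte_fin; last exact: measurable_itv.
apply: lt_le_trans Tt _; rewrite -[leRHS]add0r -below_null.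
rewrite /cdf_le; apply: pr_subadd => // y /=; rewrite in_itv /= => yt.
by have [|] := leP y (inf T - e); [left | right; rewrite /= in_itv /=; lra].
Qed.

Lemma cdf_lt_supp_inf : cdf_lt mu (supp_inf mu) = 0.
Proof.
apply/eqP; rewrite eq_le pr_ge0 andbT leNgt; apply/negP => below_gt0.
set a := supp_inf mu.
have cover : `]-oo, a[ `<=` \bigcup_n `]-oo, (a - n.+1%:R^-1)]%classic.
  move=> y /=; rewrite in_itv /= => ya.
  have [k yk] := ltr_add_invr ya; exists k => //=.
  by rewrite in_itv /= lerBrDr ltW.
have [n ] := pr_bigcup_gt0 mu (measurable_itv _) (fun=> measurable_itv _) cover below_gt0.
move=> /exists_supp_le[x /supp_inf_le ax xa].
have : 0 < n.+1%:R^-1 :> R by rewrite invr_gt0 ltr0n.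
set r := n.+1%:R^-1 in xa *; rewrite -/a in ax; lra.
Qed.

End Support.

Section PositiveLowestBid.
Context {R : realType} (B1 v1 B2 v2 : R) (mu1 mu2 : probability R R).
Hypotheses (B2_ge0 : 0 <= B2) (v1_gt0 : 0 < v1) (v2_gt0 : 0 < v2).
Hypotheses (s1 : strategy_on B1 mu1) (s2 : strategy_on B2 mu2).
Hypothesis br1 : best_response B1 v1 B2 v2 mu1 mu2.
Hypothesis br2 : best_response B2 v2 B1 v1 mu2 mu1.
Hypothesis nondeg1 : supp_inf mu1 < supp_sup mu1.
Let a := supp_inf mu1.
Hypothesis a_gt0 : 0 < a.
Let U1 := bid_util B1 v1 B2 v2 mu2.
Let U2 := bid_util B2 v2 B1 v1 mu1.

Let a_lt_B1 : a < B1.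
Proof. by have /andP[] := supp_inf_itv s1 nondeg1. Qed.

Let zero_bid : (0 : R) <= 0 <= B2.
Proof. by rewrite lexx B2_ge0. Qed.

Lemma util2_below_inf {y} : y < a -> U2 y <= - y.
Proof.
move=> ya; apply: le_trans (bid_util_le_cdf_le _ _ _ _ _ _ (ltW v2_gt0)) _.
suff -> : cdf_le mu1 y = 0 by rewrite mulr0 add0r.
apply/eqP; rewrite eq_le pr_ge0 andbT -(cdf_lt_supp_inf s1).
exact: cdf_le_lt.
Qed.

Lemma pr2_between_zero_and_inf : pr mu2 `]0, a[ = 0.
Proof.
apply/eqP; rewrite eq_le pr_ge0 andbT leNgt; apply/negP.
move=> /pr_itvoo_shrinkl[c c0 pr_ca].
suff : mu2 `]c, a[%classic = 0%E by rewrite prE // => -[] /eqP; rewrite gt_eqF.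
apply: (best_response_dominated_null s2 br2 zero_bid (measurable_itv _) c0).
move=> x /=; rewrite in_itv /= => /andP[cx xa].
have := util2_below_inf xa; have := bid_util0_ge0 B2 v2 B1 v1 mu1 (ltW v2_gt0).
rewrite -/U2; lra.
Qed.

Lemma cdf_lt2_inf_le {d} : 0 < d -> cdf_lt mu2 a <= cdf_lt mu2 d.
Proof.
move=> d0; rewrite -[leRHS]addr0 -pr2_between_zero_and_inf.
apply: pr_subadd => // z /=; rewrite in_itv /= => za.
by have [zd|dz] := ltP z d; [left | right; rewrite /= in_itv /= za andbT; lra].
Qed.

Lemma atom2_inf_gt0 : 0 < atom mu2 a.
Proof.
rewrite lt_def pr_ge0 andbT; apply/negP => /eqP atom0.
have eta_gt0 : 0 < a / (4 * v1) by rewrite divr_gt0 // mulr_gt0.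
have [e0 e0_gt0 small] := pr_itvoc_small mu2 a _ eta_gt0.
set m := pr mu2 `]a, (a + e0)] in small.
have vm_small : v1 * m <= a / 4.
  rewrite (_ : a / 4 = v1 * (a / (4 * v1))); last by field; rewrite gt_eqF.
  by rewrite ler_pM2l // ltW.
set e := Num.min e0 (a / 4).
have e_gt0 : 0 < e by rewrite lt_min e0_gt0 divr_gt0.
have [e_le_e0 e_le_a4] : e <= e0 /\ e <= a / 4 by rewrite !ge_min !lexx orbT.
have dominated x : `](a - e), (a + e)[%classic x -> U1 x + a / 4 <= U1 (a / 4).
  rewrite /= in_itv /= => /andP[ax xa].
  have cdfx : cdf_le mu2 x <= cdf_lt mu2 a + m.
    by rewrite -[cdf_lt mu2 a]addr0 -atom0 -cdf_leE cdf_le_itvoc //; lra.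
  have := ler_wpM2l (ltW v1_gt0) cdfx; rewrite mulrDr.
  have := ler_wpM2l (ltW v1_gt0) (cdf_lt2_inf_le (divr_gt0 a_gt0 (ltr0n _ 4))).
  have := bid_util_le_cdf_le B1 v1 B2 v2 mu2 x (ltW v1_gt0).
  have := bid_util_ge_cdf_lt B1 v1 B2 v2 mu2 (a / 4) (ltW v1_gt0).
  rewrite -/U1; lra.
have a4_bid : 0 <= a / 4 <= B1 by have := a_lt_B1 => ?; apply/andP; split; lra.
have := best_response_dominated_null s1 br1 a4_bid (measurable_itv _) _ dominated.
rewrite prE; last exact: measurable_itv.
move=> /(_ (divr_gt0 a_gt0 (ltr0n _ 4))) -[] /eqP; apply/negP; rewrite gt_eqF //.
exact: pr_near_supp_inf s1 e (supp_neq0 nondeg1) e_gt0.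
Qed.

Lemma tie_atom1_inf_gt0 : 0 < tie_share B2 v2 B1 v1 a * atom mu1 a.
Proof.
rewrite lt_def mulr_ge0 ?win_prob_ge0 ?pr_ge0 // andbT; apply/negP => /eqP tie0.
have U2a : U2 a = - a.
  by rewrite /U2 /bid_util tie0 (cdf_lt_supp_inf s1) addr0 mulr0 add0r.
have := bid_util0_ge0 B2 v2 B1 v1 mu1 (ltW v2_gt0); rewrite -/U2 => U20.
have : mu2 [set a] = 0%E.
  apply: (best_response_dominated_null s2 br2 zero_bid (measurable_set1 a) a_gt0).
  by move=> x ->; rewrite -/U2 U2a addNr.
by rewrite prE // => -[] /eqP; apply/negP; rewrite gt_eqF // atom2_inf_gt0.
Qed.

Lemma positive_lowest_bid_absurd : False.
Proof.
set t := tie_share B1 v1 B2 v2 a; set t' := tie_share B2 v2 B1 v1 a.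
have tt' : t + t' = 1 by exact: win_prob_compl.
have q_gt0 := atom2_inf_gt0; set q := atom mu2 a in q_gt0.
have tr_gt0 := tie_atom1_inf_gt0; rewrite -/t' in tr_gt0.
have t'_gt0 : 0 < t'.
  rewrite lt_def win_prob_ge0 andbT; apply: contraTneq tr_gt0 => ->.
  by rewrite mul0r ltxx.
have r_gt0 : 0 < atom mu1 a by rewrite -(pmulr_rgt0 _ t'_gt0).
set g := v1 * t' * q.
have g_gt0 : 0 < g by rewrite !mulr_gt0.
set d := Num.min (g / 2) (B1 - a).
have d_gt0 : 0 < d by rewrite lt_min divr_gt0 //= subr_gt0 a_lt_B1.
have [d_le_g2 d_le_Ba] : d <= g / 2 /\ d <= B1 - a by rewrite !ge_min !lexx orbT.
have ad_bid : 0 <= a + d <= B1.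
  by apply/andP; split; [rewrite addr_ge0 ?ltW | rewrite -lerBrDl].
have U1a : U1 a = v1 * cdf_lt mu2 a + v1 * (t * q) - a by rewrite /U1 /bid_util mulrDr.
have U1ad : v1 * cdf_lt mu2 a + v1 * q - (a + d) <= U1 (a + d).
  apply: le_trans (bid_util_ge_cdf_lt B1 v1 B2 v2 mu2 (a + d) (ltW v1_gt0)).
  rewrite lerD2r -mulrDr ler_pM2l // -cdf_leE cdf_le_lt //; lra.
have : mu1 [set a] = 0%E.
  have g2_gt0 : 0 < g / 2 by rewrite divr_gt0.
  apply: (best_response_dominated_null s1 br1 ad_bid (measurable_set1 a) g2_gt0).
  move=> x ->; rewrite -/U1 U1a; apply: le_trans U1ad.
  have -> : v1 * q = v1 * (t * q) + g by rewrite /g -[t](addrK t') tt'; ring.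
  lra.
by rewrite prE // => -[] /eqP; apply/negP; rewrite gt_eqF.
Qed.

End PositiveLowestBid.

Lemma supp_inf_eq0 {R : realType} (B1 v1 B2 v2 : R) (mu1 mu2 : probability R R) :
  0 <= B2 -> 0 < v1 -> 0 < v2 -> strategy_on B1 mu1 -> strategy_on B2 mu2 ->
  best_response B1 v1 B2 v2 mu1 mu2 -> best_response B2 v2 B1 v1 mu2 mu1 ->
  supp_inf mu1 < supp_sup mu1 -> supp_inf mu1 = 0.
Proof.
move=> B2_ge0 v1_gt0 v2_gt0 s1 s2 br1 br2 nondeg1.
have /andP[a_ge0 _] := supp_inf_itv s1 nondeg1.
apply/eqP; rewrite eq_le a_ge0 andbT leNgt; apply/negP => a_gt0.
exact: positive_lowest_bid_absurd B2_ge0 v1_gt0 v2_gt0 s1 s2 br1 br2 nondeg1 a_gt0.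
Qed.

Theorem lemma4 (R : realType) (B1 B2 v1 v2 : R)
  (hB1 : 0 <= B1) (hB2 : 0 <= B2) (hv1 : 0 < v1) (hv2 : 0 < v2)
  (mu1 mu2 : probability R R) :
  nash_eq B1 v1 B2 v2 mu1 mu2 ->
  supp_inf mu1 < supp_sup mu1 ->
  supp_inf mu2 < supp_sup mu2 ->
  supp_inf mu1 = 0 /\ supp_inf mu2 = 0.
Proof.
move=> [s1 s2 br1 br2] nondeg1 nondeg2; split.
- exact: supp_inf_eq0 hB2 hv1 hv2 s1 s2 br1 br2 nondeg1.
- exact: supp_inf_eq0 hB1 hv2 hv1 s2 s1 br2 br1 nondeg2.
Qed.
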